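(* Let $H$ be a graph such that $L(H)$ has a $K_t$-minor. Then for every integer $m\geq 2$, $L(mH)$ has a $K_{mt}$-minor.
   Context: Graphs are finite and may have parallel edges but no loops. $L(H)$ is the simple graph with vertex set $E(H)$ in which two distinct edges of $H$ are adjacent iff they share at least one endpoint. For $m\geq 2$, $mH$ denotes the graph obtained from $H$ by replacing each edge $e$ by $m$ parallel copies of $e$. A graph has a $K_t$-minor if $K_t$ can be obtained from a subgraph of it by contracting edges. *)

From mathcomp Require Import all_boot.
Set Implicit Arguments. Unset Strict Implicit. Unset Printing Implicit Defensive.

(* A finite multigraph H (parallel edges allowed, no loops) is given by a
   finite vertex type V, a finite edge type E and an endpoint map
   ends : E -> V * V with (ends e).1 != (ends e).2 for every edge e. *)

Definition incident (V E : finType) (ends : E -> V * V) (e : E) (v : V) : bool :=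
  (v == (ends e).1) || (v == (ends e).2).

Arguments incident {V E} ends e v.
Definition line_graph (V E : finType) (ends : E -> V * V) : rel E :=
  fun e f => (e != f) && [exists v, incident ends e v && incident ends f v].

(* mH: every edge e replaced by m parallel copies (e, i), i < m. *)

Definition mult_ends (m : nat) (V E : finType) (ends : E -> V * V)
  : E * 'I_m -> V * V := fun p => ends p.1.

Definition connected_in (T : finType) (r : rel T) (A : {set T}) : Prop :=
  forall x y, x \in A -> y \in A ->
    connect [rel u v | [&& r u v, u \in A & v \in A]] x y.

(* G has a K_t minor: there are t pairwise disjoint, nonempty, connected
   branch sets, pairwise joined by an edge (standard equivalent of "K_t is
   obtained from a subgraph by contracting edges"). *)
Definition has_K_minor (T : finType) (r : rel T) (t : nat) : Prop :=
  exists B : 'I_t -> {set T},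
    [/\ forall i, B i != set0,
        forall i, connected_in r (B i),
        forall i j, i != j -> [disjoint B i & B j]
      & forall i j, i != j -> exists x y, [/\ x \in B i, y \in B j & r x y]].

Arguments mult_ends m {V E} ends _.

(* Split each branch set B_k of a K_t-model in L(H) into its m copies
   B_k x {i}, i < m.  A copy is connected because L(mH) contains L(H) on each
   layer {i}; copies of different branch sets are joined because the edges
   of L(H) lift to every pair of layers; and two copies of the same branch
   set are joined because parallel edges of mH share their endpoints.  This
   gives a K_{mt}-model in L(mH), indexed by pairs (k, i). *)

From mathcomp Require Import all_boot.
Set Implicit Arguments. Unset Strict Implicit. Unset Printing Implicit Defensive.

Section KMinorModel.
Variables (T : finType) (r : rel T).

Definition K_minor_model (I : finType) (B : I -> {set T}) : Prop :=
  [/\ forall i, B i != set0,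
      forall i, connected_in r (B i),
      forall i j, i != j -> [disjoint B i & B j]
    & forall i j, i != j -> exists x y, [/\ x \in B i, y \in B j & r x y]].

Lemma K_minor_model_comp (I J : finType) (f : J -> I) (B : I -> {set T}) :
  injective f -> K_minor_model B -> K_minor_model (B \o f).
Proof.
move=> injf [B0 Bconn Bdisj Badj]; split=> [i | i | i j ij | i j ij] /=.
- exact: B0.
- exact: Bconn.
- by apply: Bdisj; rewrite (inj_eq injf).
- by apply: Badj; rewrite (inj_eq injf).
Qed.

Lemma K_minor_model_card (I : finType) (B : I -> {set T}) :
  K_minor_model B -> has_K_minor r #|I|.
Proof.
by move=> BK; exists (B \o enum_val); apply: K_minor_model_comp BK => //; apply: enum_val_inj.
Qed.

End KMinorModel.

Section LineGraphMult.
Variables (V E : finType) (ends : E -> V * V) (m : nat).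

Lemma line_graph_mult_lift (a b : E) (i j : 'I_m) :
  line_graph ends a b -> line_graph (mult_ends m ends) (a, i) (b, j).
Proof.
case/andP=> ab /existsP[v /andP[av bv]]; apply/andP; split.
  by rewrite xpair_eqE negb_and ab.
by apply/existsP; exists v; apply/andP.
Qed.

Lemma line_graph_mult_parallel (a : E) (i j : 'I_m) :
  i != j -> line_graph (mult_ends m ends) (a, i) (a, j).
Proof.
move=> ij; apply/andP; split; first by rewrite xpair_eqE negb_and ij orbT.
by apply/existsP; exists (ends a).1; rewrite /incident /mult_ends /= eqxx.
Qed.

Lemma connected_in_setX1 (A : {set E}) (i : 'I_m) :
  connected_in (line_graph ends) A ->
  connected_in (line_graph (mult_ends m ends)) (setX A [set i]).
Proof.
move=> Aconn [a i'] [b j']; rewrite !in_setX !in_set1 /=.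
move=> /andP[Aa /eqP->] /andP[Ab /eqP->].
have /connectP[s] := Aconn a b Aa Ab.
elim: s a Aa => [|c s IHs] a Aa /=; first by move=> _ ->; apply: connect0.
case/andP=> /and3P[ac _ Ac] path_cs last_cs.
apply: connect_trans (connect1 _) (IHs c Ac path_cs last_cs).
by rewrite /= line_graph_mult_lift // !in_setX !in_set1 /= Aa Ac eqxx.
Qed.

Lemma K_minor_model_mult (I : finType) (B : I -> {set E}) :
  K_minor_model (line_graph ends) B ->
  K_minor_model (line_graph (mult_ends m ends))
    (fun p : I * 'I_m => setX (B p.1) [set p.2]).
Proof.
move=> [B0 Bconn Bdisj Badj]; split.
- move=> [k i]; have /set0Pn[a Ba] := B0 k.
  by apply/set0Pn; exists (a, i); rewrite in_setX in_set1 Ba eqxx.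
- by move=> [k i]; apply: connected_in_setX1.
- move=> [k i] [l j] /=; rewrite xpair_eqE negb_and => kl_ij.
  apply/pred0P => -[a i'] /=; rewrite !in_setX !in_set1.
  case/orP: kl_ij => [kl | ij].
    apply/negbTE/negP => /andP[/andP[Bka _] /andP[Bla _]].
    by rewrite (disjointFr (Bdisj _ _ kl) Bka) in Bla.
  by apply/negbTE; apply: contra ij => /andP[/andP[_ /eqP<-] /andP[_ /eqP<-]].
- move=> [k i] [l j] /=; rewrite xpair_eqE negb_and.
  have [<- /= ij | kl _] := eqVneq k l.
    have /set0Pn[a Ba] := B0 k.
    exists (a, i), (a, j); rewrite !in_setX !in_set1 /= Ba !eqxx.
    by split=> //; apply: line_graph_mult_parallel.
  have [a [b [Ba Bb ab]]] := Badj k l kl.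
  exists (a, i), (b, j); rewrite !in_setX !in_set1 /= Ba Bb !eqxx.
  by split=> //; apply: line_graph_mult_lift.
Qed.

End LineGraphMult.

Theorem mainTheorem12 (V E : finType) (ends : E -> V * V)
  (noloop : forall e, (ends e).1 != (ends e).2) (t : nat) :
  has_K_minor (line_graph ends) t ->
  forall m : nat, 2 <= m -> has_K_minor (line_graph (mult_ends m ends)) (m * t).
Proof.
move=> [B BK] m _.
have := K_minor_model_card (K_minor_model_mult m BK).
by rewrite card_prod !card_ord mulnC.
Qed.
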